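(* Let $R$ be a commutative local domain with field of fractions $Q$ and maximal ideal $\mathfrak m$. Let $a,b,c\in R$ be such that the ideal $aR+bR+cR$ cannot be generated by two elements. Set $\alpha=(a,b,c)\in R^3$ and $H=R^3\cap Q\alpha$ (intersection inside $Q^3$). Then: (i) $M=R^3/H$ is an indecomposable, finitely generated, torsion-free $R$-module of rank $2$; (ii) if the integral closure $\overline{R}$ of $R$ in $Q$ is local, then $\mathrm{End}_R(M)$ is a local ring.
   Context: A module $M$ is torsion-free if $M\to M\otimes_R Q$ is injective; its rank is $\dim_Q(M\otimes_RQ)$. *)

From HB Require Import structures.
From mathcomp Require Import all_boot all_order all_algebra.
From mathcomp Require Import fraction.
Set Implicit Arguments. Unset Strict Implicit. Unset Printing Implicit Defensive.
Import GRing.Theory.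
Local Open Scope ring_scope.

(* A (commutative) ring given as a subring S (a predicate) of a commutative   *)
Definition sub_ideal (A : comNzRingType) (S I : A -> Prop) : Prop :=
  (forall x, I x -> S x) /\ I 0 /\
  (forall x y, I x -> I y -> I (x + y)) /\
  (forall s x, S s -> I x -> I (s * x)).

Definition sub_proper_ideal (A : comNzRingType) (S I : A -> Prop) : Prop :=
  sub_ideal S I /\ ~ I 1.

Definition sub_maximal_ideal (A : comNzRingType) (S I : A -> Prop) : Prop :=
  sub_proper_ideal S I /\
  forall J, sub_proper_ideal S J -> (forall x, I x -> J x) -> forall x, J x <-> I x.

Definition sub_local (A : comNzRingType) (S : A -> Prop) : Prop :=
  (exists I, sub_maximal_ideal S I) /\
  forall I J, sub_maximal_ideal S I -> sub_maximal_ideal S J -> forall x, I x <-> J x.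

Definition local_ring (R : comNzRingType) : Prop := sub_local (fun _ : R => True).

Definition tofr (R : idomainType) : R -> {fraction R} := @FracField.tofrac R.

Definition integral_over (R : idomainType) (x : {fraction R}) : Prop :=
  exists p : {poly R}, p \is monic /\ (map_poly (@tofr R) p).[x] = 0.

Definition integral_closure (R : idomainType) : {fraction R} -> Prop :=
  fun x => integral_over x.

Definition not_two_generated (R : comNzRingType) (a b c : R) : Prop :=
  ~ exists x y : R, forall z : R,
      (exists r s t : R, z = r * a + s * b + t * c) <-> (exists u v : R, z = u * x + v * y).

Definition alpha (R : nzRingType) (a b c : R) : 'rV[R]_3 :=
  \row_(i < 3) nth 0 [:: a; b; c] i.

Definition inH (R : idomainType) (a b c : R) (v : 'rV[R]_3) : Prop :=
  exists q : {fraction R}, forall i : 'I_3,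
    tofr (v ord0 i) = q * tofr (alpha a b c ord0 i).

Definition submodule (R : nzRingType) (M : lmodType R) (A : M -> Prop) : Prop :=
  A 0 /\ forall (r : R) x y, A x -> A y -> A (r *: x + y).

Definition indecomposable (R : nzRingType) (M : lmodType R) : Prop :=
  (exists m : M, m != 0) /\
  forall A B : M -> Prop, submodule A -> submodule B ->
    (forall m, exists x y, A x /\ B y /\ m = x + y) ->
    (forall m, A m -> B m -> m = 0) ->
    (forall m, A m -> m = 0) \/ (forall m, B m -> m = 0).

Definition finitely_generated (R : nzRingType) (M : lmodType R) : Prop :=
  exists (n : nat) (g : 'I_n -> M), forall m : M,
    exists c : 'I_n -> R, m = \sum_(i < n) c i *: g i.

Definition torsion_free (R : idomainType) (M : lmodType R) : Prop :=
  forall (r : R) (m : M), r != 0 -> r *: m = 0 -> m = 0.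

Definition lin_indep (R : nzRingType) (M : lmodType R) (n : nat) (v : 'I_n -> M) : Prop :=
  forall c : 'I_n -> R, \sum_(i < n) c i *: v i = 0 -> forall i, c i = 0.

(* rank n: dim_Q (M (x) Q) = n, i.e. maximal number of R-independent elements *)
Definition has_rank (R : idomainType) (M : lmodType R) (n : nat) : Prop :=
  (exists v : 'I_n -> M, lin_indep v) /\
  forall v : 'I_n.+1 -> M, ~ lin_indep v.

Definition end_unit (R : nzRingType) (M : lmodType R) (f : M -> M) : Prop :=
  exists g : M -> M, linear g /\ cancel f g /\ cancel g f.

Definition End_local (R : nzRingType) (M : lmodType R) : Prop :=
  ~ (forall m : M, m = 0) /\
  (forall f g : M -> M, linear f -> linear g ->
     ~ end_unit f -> ~ end_unit g -> ~ end_unit (fun m => f m + g m)) /\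
  (forall f h : M -> M, linear f -> linear h -> ~ end_unit f ->
     ~ end_unit (h \o f) /\ ~ end_unit (f \o h)).

(* Write H = ker pi = R^3 /\ Q alpha and m for the maximal ideal of R.  As
   aR + bR + cR needs three generators, every syzygy of (a, b, c), and hence
   every vector of H, has all its entries in m.  An endomorphism f of M lifts
   to a matrix E with alpha E = lambda alpha over Q; lambda is an eigenvalue of
   E, hence integral over R.

   If f is an idempotent other than 0 and 1, computing the trace of E in a
   basis of Q^3 made of alpha, a vector of the image and a vector of the
   kernel of f gives lambda = tr E - 1 in R.  Then E - lambda kills alpha, so
   its entries lie in m, and the (0,0) entry of E^2 - E shows
   lambda (lambda - 1) in m.  Hence E or 1 - E is invertible, which forces
   f = 0 or f = 1.

   If f has an inverse with lift G, then EG - 1 maps R^3 into H, so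
   lambda mu = 1 + tr (EG - 1) is a unit of R and lambda is a unit of the
   integral closure.  Conversely, if lambda is a unit there, the integral
   equation of lambda^-1 gives a polynomial D in E with alpha (ED + 1) = 0, so
   ED is invertible and E^-1 induces the inverse of f.  Thus f is a non-unit
   iff lambda lies in the maximal ideal of the integral closure. *)

From HB Require Import structures.
From mathcomp Require Import all_boot all_order all_algebra fingroup perm.
From mathcomp Require Import fraction ring zify.
From mathcomp Require classical_sets.
From Stdlib Require Import Classical.
Set Implicit Arguments. Unset Strict Implicit. Unset Printing Implicit Defensive.
Import GRing.Theory.
Local Open Scope ring_scope.

Section SubringIdeals.
Variables (A : comNzRingType) (S : A -> Prop).

Definition sub_unit (x : A) : Prop := exists y, S y /\ x * y = 1.

Lemma sub_unit_notin_proper_ideal {I x} : sub_proper_ideal S I -> sub_unit x -> ~ I x.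
Proof.
by move=> [[_ [_ [_ IM]]] I1] [y [Sy xy]] Ix; apply: I1; rewrite -xy mulrC; apply: IM.
Qed.

Lemma sub_maximal_ideal_above {J} : sub_proper_ideal S J ->
  exists I, sub_maximal_ideal S I /\ forall x, J x -> I x.
Proof.
(* Zorn's lemma needs an upper bound for the empty chain, hence the empty
   predicate in P. *)
move=> Jp; pose P B := (forall z, ~ B z) \/ (sub_proper_ideal S B /\ forall z, J z -> B z).
have [I [PI Imax]] : exists I, P I /\ forall B, classical_sets.proper I B -> ~ P B.
  apply: classical_sets.Zorn_bigcup => F FP Ftot.
  have ideal_of B z : F B -> B z -> sub_proper_ideal S B /\ forall z, J z -> B z.
    by move=> FB Bz; case: (FP B FB) => // /(_ z).
  case: (classic (exists2 B, F B & exists z, B z)) => [[B0 FB0 [z0 B0z0]]|none]; last first.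
    by left=> z [B FB Bz]; apply: none; exists B => //; exists z.
  have [_ JB0] := ideal_of B0 z0 FB0 B0z0.
  right; split; last by move=> z Jz; exists B0 => //; apply: JB0.
  split; [split; [|split; [|split]]|].
  - by move=> z [B FB Bz]; have [[[BS _] _] _] := ideal_of B z FB Bz; apply: BS.
  - by exists B0 => //; apply: JB0; case: Jp => [[_ []]].
  - move=> z1 z2 [B1 FB1 B1z] [B2 FB2 B2z].
    have [B [FB [sub1 sub2]]] :
        exists B, F B /\ (forall w, B1 w -> B w) /\ (forall w, B2 w -> B w).
      by case: (Ftot B1 B2 FB1 FB2) => sub; [exists B2 | exists B1].
    have [[[_ [_ [BD _]]] _] _] := ideal_of B z1 FB (sub1 _ B1z).
    by exists B => //; apply: BD; [apply: sub1 | apply: sub2].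
  - move=> s z Ss [B FB Bz]; have [[[_ [_ [_ BM]]] _] _] := ideal_of B z FB Bz.
    by exists B => //; apply: BM.
  - by move=> [B FB B1]; have [[_ nB1] _] := ideal_of B 1 FB B1.
have [Iempty|[Ip JI]] := PI.
  exfalso; apply: (Imax J); last by right.
  split=> [z /Iempty //|JI]; apply: (Iempty 0); apply: JI.
  by case: Jp => [[_ []]].
exists I; split=> //; split=> // I' I'p II' z; split=> [I'z|]; last exact: II'.
apply: NNPP => nIz; apply: (Imax I'); last by right; split=> // w /JI /II'.
by split=> // /(_ z I'z).
Qed.

Hypotheses (S0 : S 0) (S1 : S 1) (SD : forall x y, S x -> S y -> S (x + y))
  (SM : forall x y, S x -> S y -> S (x * y)).

Lemma sub_local_nonunit : sub_local S ->
  exists I, sub_maximal_ideal S I /\ forall x, S x -> ~ sub_unit x -> I x.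
Proof.
case=> [[I Imax] Iuniq]; exists I; split=> // x Sx nux.
pose xS z := exists2 s, S s & z = s * x.
have xSp : sub_proper_ideal S xS.
  split; [split; [|split; [|split]]|].
  - by move=> z [s Ss ->]; apply: SM.
  - by exists 0; rewrite ?mul0r.
  - by move=> _ _ [s1 Ss1 ->] [s2 Ss2 ->]; exists (s1 + s2); rewrite ?mulrDl //; apply: SD.
  - by move=> s _ Ss [t St ->]; exists (s * t); rewrite ?mulrA //; apply: SM.
  - by move=> [s Ss E]; apply: nux; exists s; rewrite mulrC -E.
have [J [Jmax xSJ]] := sub_maximal_ideal_above xSp.
by apply/(Iuniq _ _ Imax Jmax)/xSJ; exists 1; rewrite ?mul1r.
Qed.

End SubringIdeals.

Section DetIdeal.
Variables (R : comNzRingType) (P : R -> Prop).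
Hypotheses (P0 : P 0) (PD : forall x y, P x -> P y -> P (x + y))
  (PM : forall r x, P x -> P (r * x)).

Lemma det_1Dmx_sub1 n (S : 'M[R]_n) : (forall i j, P (S i j)) ->
  P (\det (1%:M + S) - 1).
Proof.
move=> PS; rewrite /determinant (bigD1 1%g) //= odd_perm1 expr0 mul1r addrAC.
apply: PD.
  apply: (big_ind (fun z => P (z - 1))); first by rewrite subrr.
    move=> x y Px Py.
    have -> : x * y - 1 = (x - 1) * (y - 1) + ((x - 1) + (y - 1)) by ring.
    by apply: PD => //; [apply: PM | apply: PD].
  by move=> i _; rewrite !mxE perm1 eqxx mulr1n addrAC subrr add0r.
apply: (big_ind P) => // s /eqP s1.
have [i si] : exists i, s i != i.
  apply: NNPP => fix_s; apply/s1/permP => i; rewrite perm1.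
  by apply/eqP/negbNE/negP => si; apply: fix_s; exists i.
rewrite (bigD1 i) //= mulrCA mulrC; apply: PM.
by rewrite !mxE eq_sym (negPf si) mulr0n add0r.
Qed.

End DetIdeal.

Section LocalRing.
Variable R : comUnitRingType.
Hypothesis Rloc : local_ring R.

Lemma local_nonunitD (x y : R) :
  x \notin GRing.unit -> y \notin GRing.unit -> x + y \notin GRing.unit.
Proof.
have [I [[[[_ [_ [ID IM]]] I1] _] nonunitI]] :=
  @sub_local_nonunit R (fun _ => True) I I (fun _ _ _ _ => I) (fun _ _ _ _ => I) Rloc.
have nonunitI' z : z \notin GRing.unit -> I z.
  by move=> /negP nz; apply: nonunitI => // [[w [_ zw]]]; apply/nz/unitrPr; exists w.
move=> /nonunitI' Ix /nonunitI' Iy; apply/negP => xyU.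
by apply: I1; rewrite -(mulVr xyU); apply: IM => //; apply: ID.
Qed.

Lemma local_unitDr (x n : R) : n \notin GRing.unit ->
  (x + n \is a GRing.unit) = (x \is a GRing.unit).
Proof.
move=> nn; apply/idP/idP; apply: contraLR => nu; first exact: local_nonunitD.
by have := local_nonunitD nu (_ : - n \notin _); rewrite unitrN addrK; apply.
Qed.

Definition nonunit_mx {m n} (X : 'M[R]_(m, n)) : Prop :=
  forall i j, X i j \notin GRing.unit.

Lemma nonunit_mxD m n (X Y : 'M[R]_(m, n)) :
  nonunit_mx X -> nonunit_mx Y -> nonunit_mx (X + Y).
Proof. by move=> nX nY i j; rewrite mxE; apply: local_nonunitD. Qed.

Lemma nonunit_mxN m n (X : 'M[R]_(m, n)) : nonunit_mx X -> nonunit_mx (- X).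
Proof. by move=> nX i j; rewrite mxE unitrN. Qed.

Lemma nonunit_mxZ m n r (X : 'M[R]_(m, n)) : nonunit_mx X -> nonunit_mx (r *: X).
Proof. by move=> nX i j; rewrite mxE unitrM negb_and nX orbT. Qed.

Lemma nonunit_mxMl m n p (X : 'M[R]_(m, n)) (Y : 'M[R]_(n, p)) :
  nonunit_mx X -> nonunit_mx (X *m Y).
Proof.
move=> nX i j; rewrite mxE; apply: (big_ind (fun z => z \notin GRing.unit)).
- by rewrite unitr0.
- exact: local_nonunitD.
- by move=> k _; rewrite unitrM negb_and nX.
Qed.

Lemma nonunit_mxtrace n (X : 'M[R]_n) : nonunit_mx X -> \tr X \notin GRing.unit.
Proof.
move=> nX; apply: (big_ind (fun z => z \notin GRing.unit)) => //.
- by rewrite unitr0.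
- exact: local_nonunitD.
Qed.

Lemma nonunit_scalar_mx n (x : R) : x \notin GRing.unit -> nonunit_mx (x%:M : 'M_n).
Proof. by move=> nx i j; rewrite mxE; case: eqP; rewrite ?unitr0. Qed.

Lemma unitmx_1D n (X : 'M[R]_n) : nonunit_mx X -> 1%:M + X \in unitmx.
Proof.
move=> nX; rewrite unitmxE -[\det _](subrK 1) addrC local_unitDr ?unitr1 //.
apply: (@det_1Dmx_sub1 _ (fun z => z \notin GRing.unit)) => //.
- by rewrite unitr0.
- exact: local_nonunitD.
- by move=> r z nz; rewrite unitrM negb_and nz orbT.
Qed.

End LocalRing.

Section LinearFun.
Variables (R : pzRingType) (U V : lmodType R) (f : U -> V).
Hypothesis f_lin : linear f.

Lemma linear_fun0 : f 0 = 0.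
Proof.
have := f_lin 1 0 0; rewrite !scale1r !addr0 => ff.
by apply: (addrI (f 0)); rewrite addr0 -ff.
Qed.

Lemma linear_funD : {morph f : x y / x + y}.
Proof. by move=> x y; have := f_lin 1 x y; rewrite !scale1r. Qed.

Lemma linear_funZ r x : f (r *: x) = r *: f x.
Proof. by have := f_lin r x 0; rewrite !addr0 linear_fun0 addr0. Qed.

End LinearFun.

Section Submodule.
Variables (R : nzRingType) (V : lmodType R) (A : V -> Prop).
Hypothesis A_sub : submodule A.

Lemma submodule0 : A 0.
Proof. by case: A_sub. Qed.

Lemma submoduleD x y : A x -> A y -> A (x + y).
Proof. by case: A_sub => _ Acl Ax Ay; rewrite -[x]scale1r; apply: Acl. Qed.

Lemma submoduleZ r x : A x -> A (r *: x).
Proof. by case: A_sub => A0 Acl Ax; rewrite -[_ *: _]addr0; apply: Acl. Qed.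

Lemma submoduleN x : A x -> A (- x).
Proof. by rewrite -scaleN1r; apply: submoduleZ. Qed.

Lemma submodule_sum I r (P : pred I) (F : I -> V) :
  (forall i, P i -> A (F i)) -> A (\sum_(i <- r | P i) F i).
Proof. by move=> AF; apply: big_ind => //; [apply: submodule0 | apply: submoduleD]. Qed.

End Submodule.

Lemma direct_sum_unique (R : nzRingType) (V : lmodType R) (A B : V -> Prop) m x x' :
  submodule A -> submodule B -> (forall m, A m -> B m -> m = 0) ->
  A x -> B (m - x) -> A x' -> B (m - x') -> x = x'.
Proof.
move=> Asub Bsub AB0 Ax Bx Ax' Bx'; apply/eqP; rewrite -subr_eq0; apply/eqP/AB0.
  by apply: submoduleD => //; apply: submoduleN.
have -> : x - x' = (m - x') - (m - x) by rewrite [RHS]addrC opprB addrA subrK.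
by apply: submoduleD => //; apply: submoduleN.
Qed.

Definition i0 : 'I_3 := @Ordinal 3 0 isT.
Definition i1 : 'I_3 := @Ordinal 3 1 isT.
Definition i2 : 'I_3 := @Ordinal 3 2 isT.

Lemma ord3P (i : 'I_3) : [\/ i = i0, i = i1 | i = i2].
Proof.
by case: i => [[|[|[|//]]] ?]; [apply: Or31 | apply: Or32 | apply: Or33]; apply: val_inj.
Qed.

Lemma sum_ord3 (V : nmodType) (F : 'I_3 -> V) : \sum_i F i = F i0 + F i1 + F i2.
Proof.
rewrite !big_ord_recl big_ord0 addr0 addrA.
by congr (F _ + F _ + F _); apply: val_inj.
Qed.

Section Trace3.
Variables (F : fieldType) (al : 'rV[F]_3).
Hypothesis al_neq0 : al != 0.

Lemma scale_line_indep {u : 'rV[F]_3} {c d} :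
  (forall q, u != q *: al) -> d *: al + c *: u = 0 -> c = 0.
Proof.
move=> u_off cud; apply: contraTeq (u_off (- d / c)) => c_neq0; apply/negPn/eqP.
apply: (scalerI c_neq0); rewrite scalerA mulrCA divff // mulr1 scaleNr.
by apply/eqP; rewrite -addr_eq0 addrC cud.
Qed.

Lemma mxtrace3_of_action (E : 'M[F]_3) (u w : 'rV[F]_3) (l s t : F) :
  (forall q, u != q *: al) -> (forall q, w != q *: al) ->
  al *m E = l *: al -> u *m E = u + s *: al -> w *m E = t *: al ->
  \tr E = l + 1.
Proof.
move=> u_off w_off alE uE wE.
pose P := \matrix_(i < 3) nth 0 [:: al; u; w] i.
pose T := \matrix_(i < 3, j < 3)
  nth 0 (nth [::] [:: [:: l; 0; 0]; [:: s; 1; 0]; [:: t; 0; 0]] i) j.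
have mulP (v : 'rV_3) : v *m P = v 0 i0 *: al + v 0 i1 *: u + v 0 i2 *: w.
  by rewrite mulmx_sum_row sum_ord3 !rowK.
have PE : P *m E = T *m P.
  apply/row_matrixP => i; rewrite !row_mul rowK mulP !mxE.
  case: (ord3P i) => ->; rewrite /= ?alE ?uE ?wE !scale0r ?scale1r !addr0 //.
  by rewrite addrC.
have P_free (v : 'rV_3) : v *m P = 0 -> v = 0.
  move=> vP0; have vTP0 : v *m T *m P = 0 by rewrite -mulmxA -PE mulmxA vP0 mul0mx.
  move: vTP0; rewrite mulP !mxE !sum_ord3 !mxE /= !mulr0 !addr0 mulr1 add0r scale0r addr0.
  move=> /(scale_line_indep u_off) v1.
  move: (vP0); rewrite mulP v1 scale0r addr0 => /(scale_line_indep w_off) v2.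
  move: vP0; rewrite mulP v1 v2 !scale0r !addr0 => /eqP.
  rewrite scaler_eq0 (negPf al_neq0) orbF => /eqP v0.
  by apply/rowP => i; rewrite mxE; case: (ord3P i) => ->.
have P_unit : P \in unitmx.
  by rewrite unitmxE unitfE; apply/negP => /det0P [v /negP nv /P_free /eqP].
rewrite -[E]mul1mx -(mulVmx P_unit) -mulmxA PE mxtrace_mulC -mulmxA mulmxV // mulmx1.
by rewrite /mxtrace sum_ord3 !mxE /= addr0.
Qed.

End Trace3.

Lemma reciprocal_root_sum (K : fieldType) (p : {poly K}) (y lam : K) :
  p \is monic -> root p y -> lam * y = 1 ->
  \sum_(i < (size p).-1) p`_i * lam ^+ ((size p).-1 - i) = -1.
Proof.
move=> p_monic /rootP py0 lam_y.
have size_p : size p = (size p).-1.+1 by rewrite prednK // size_poly_gt0 monic_neq0.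
set d := (size p).-1 in size_p *.
move: py0; rewrite horner_coef size_p big_ord_recr /=.
have -> : p`_d = 1 by move/monicP: p_monic; rewrite lead_coefE.
rewrite mul1r => /eqP; rewrite addr_eq0 => /eqP py.
have -> : \sum_(i < d) p`_i * lam ^+ (d - i) = lam ^+ d * \sum_(i < d) p`_i * y ^+ i.
  rewrite mulr_sumr; apply: eq_bigr => i _.
  have -> : lam ^+ d = lam ^+ (d - i) * lam ^+ i by rewrite -exprD subnK // ltnW.
  by rewrite -mulrA [lam ^+ i * _]mulrCA -exprMn lam_y expr1n mulr1 mulrC.
by rewrite py mulrN -exprMn lam_y expr1n.
Qed.

Section NotTwoGenerated.
Variable R : comUnitRingType.
Implicit Types a b c : R.

Lemma not_two_generated_rot {a b c} :
  not_two_generated a b c -> not_two_generated b c a.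
Proof.
move=> ntg [x [y gen]]; apply: ntg; exists x, y => z; apply: iff_trans (gen z).
by split=> -[r [s [t ->]]]; [exists s, t, r | exists t, r, s]; ring.
Qed.

Lemma not_two_generated_comb {a b c} :
  not_two_generated a b c -> ~ exists r s, a = r * b + s * c.
Proof.
move=> ntg [r [s a_bc]]; apply: ntg; exists b, c => z; split.
  by move=> [r' [s' [t' ->]]]; exists (r' * r + s'), (r' * s + t'); rewrite a_bc; ring.
by move=> [u [v ->]]; exists 0, u, v; ring.
Qed.

Lemma not_two_generated_neq0 {a b c} : not_two_generated a b c -> a != 0.
Proof.
move=> /not_two_generated_comb ntg; apply/eqP => a0; apply: ntg.
by exists 0, 0; rewrite a0; ring.
Qed.

Lemma syzygy_nonunit0 {a b c s0 s1 s2} : not_two_generated a b c ->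
  a * s0 + b * s1 + c * s2 = 0 -> s0 \notin GRing.unit.
Proof.
move=> ntg syz; apply/negP => s0U; apply: (not_two_generated_comb ntg).
exists (- s1 / s0), (- s2 / s0); apply: (mulIr s0U).
have -> : (- s1 / s0 * b + - s2 / s0 * c) * s0 = (- s1 * b - s2 * c) * (s0^-1 * s0) by ring.
move/eqP: syz; rewrite -addrA addr_eq0 => /eqP ->.
by rewrite mulVr // mulr1; ring.
Qed.

Lemma syzygy_nonunit {a b c s0 s1 s2} : not_two_generated a b c ->
  a * s0 + b * s1 + c * s2 = 0 ->
  [/\ s0 \notin GRing.unit, s1 \notin GRing.unit & s2 \notin GRing.unit].
Proof.
move=> ntg syz; have ntg' := not_two_generated_rot ntg.
have ntg'' := not_two_generated_rot ntg'.
split; first exact: syzygy_nonunit0 ntg syz.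
  by apply: (syzygy_nonunit0 (s1 := s2) (s2 := s0) ntg'); rewrite addrC addrA.
by apply: (syzygy_nonunit0 (s1 := s0) (s2 := s1) ntg''); rewrite -addrA addrC.
Qed.

End NotTwoGenerated.

Section FractionField.
Variable R : idomainType.
Local Notation tf := (@FracField.tofrac R).

Lemma tofrac_inj : injective tf.
Proof. by move=> x y /eqP; rewrite tofrac_eq => /eqP. Qed.

Lemma map_mx_tofrac_inj m n : injective (map_mx tf : 'M[R]_(m, n) -> _).
Proof.
move=> A B /matrixP AB; apply/matrixP => i j; apply: tofrac_inj.
by have := AB i j; rewrite !mxE.
Qed.

Lemma integral_closureE (x : {fraction R}) : integral_closure x <-> integralOver tf x.
Proof. by split=> [[p [p_monic /rootP px]] | [p p_monic /rootP px]]; exists p. Qed.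

Lemma integral_closure_tofrac r : integral_closure (tf r).
Proof. exact/integral_closureE/integral_id. Qed.

Lemma integral_closure0 : integral_closure (0 : {fraction R}).
Proof. by rewrite -(rmorph0 tf); apply: integral_closure_tofrac. Qed.

Lemma integral_closure1 : integral_closure (1 : {fraction R}).
Proof. by rewrite -(rmorph1 tf); apply: integral_closure_tofrac. Qed.

Lemma integral_closureD (x y : {fraction R}) :
  integral_closure x -> integral_closure y -> integral_closure (x + y).
Proof.
by move=> /integral_closureE ix /integral_closureE iy; apply/integral_closureE/integral_add.
Qed.

Lemma integral_closureM (x y : {fraction R}) :
  integral_closure x -> integral_closure y -> integral_closure (x * y).
Proof.
by move=> /integral_closureE ix /integral_closureE iy; apply/integral_closureE/integral_mul.
Qed.

End FractionField.

Section QuotientModule.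
Variables (R : idomainType) (a b c : R).
Hypothesis ntg : not_two_generated a b c.
Variables (M : lmodType R) (pi : {linear 'rV[R]_3 -> M}).
Hypotheses (pi_surj : forall m : M, exists v, pi v = m)
  (ker_pi : forall v, pi v = 0 <-> inH a b c v).

Local Notation al := (alpha a b c).
Local Notation tf := (@FracField.tofrac R).
Local Notation mQ := (map_mx tf).

Lemma alpha_neq0 : mQ al != 0.
Proof.
apply/eqP => /matrixP /(_ 0 i0) /eqP; rewrite !mxE /= tofrac_eq0.
by apply/negP: (not_two_generated_neq0 ntg).
Qed.

Lemma pi_eq0 v : pi v = 0 <-> exists q, mQ v = q *: mQ al.
Proof.
rewrite ker_pi; split=> -[q vq]; exists q; last move=> i.
  by apply/rowP => i; rewrite 3!mxE; apply: vq.
by move/rowP: vq => /(_ i); rewrite 3!mxE.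
Qed.

Lemma pi_alpha : pi al = 0.
Proof. by apply/pi_eq0; exists 1; rewrite scale1r. Qed.

Lemma syzygy_mx_nonunit n (X : 'M[R]_(3, n)) : al *m X = 0 -> nonunit_mx X.
Proof.
move=> /matrixP alX i j; have := alX 0 j; rewrite !mxE sum_ord3 !mxE /=.
by move/(syzygy_nonunit ntg) => [? ? ?]; case: (ord3P i) => ->.
Qed.

Lemma pi_eq0_nonunit v : pi v = 0 -> nonunit_mx v.
Proof.
move=> /pi_eq0 [q vq].
have cross i j : v 0 i * al 0 j = v 0 j * al 0 i.
  apply: tofrac_inj; move/rowP: vq => vq.
  by rewrite !rmorphM /=; have := vq i; have := vq j; rewrite !mxE => -> ->; ring.
have syz1 : a * v 0 i1 + b * - v 0 i0 + c * 0 = 0.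
  by have := cross i1 i0; rewrite !mxE /= => e; rewrite [a * _]mulrC e; ring.
have syz2 : a * v 0 i2 + b * 0 + c * - v 0 i0 = 0.
  by have := cross i2 i0; rewrite !mxE /= => e; rewrite [a * _]mulrC e; ring.
have [n1 n0 _] := syzygy_nonunit ntg syz1; have [n2 _ _] := syzygy_nonunit ntg syz2.
move=> i j; rewrite [i]ord1; rewrite unitrN in n0.
by case: (ord3P j) => ->.
Qed.

Definition maps_into_ker (N : 'M[R]_3) : Prop := forall z, pi (z *m N) = 0.
Definition ker_stable (E : 'M[R]_3) : Prop := forall z, pi z = 0 -> pi (z *m E) = 0.
Definition lifts (f : M -> M) (E : 'M[R]_3) : Prop := forall z, pi (z *m E) = f (pi z).

Lemma maps_into_ker_nonunit N : maps_into_ker N -> nonunit_mx N.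
Proof. by move=> N0 i j; have := pi_eq0_nonunit (N0 'e_i) 0 j; rewrite -rowE mxE. Qed.

Lemma maps_into_ker_trace N : maps_into_ker N -> mQ (al *m N) = tf (\tr N) *: mQ al.
Proof.
move=> N0.
have [q Nq] : exists q : 'I_3 -> {fraction R}, forall i, mQ (row i N) = q i *: mQ al.
  apply: (@fin_all_exists _ (fun=> {fraction R}) (fun i q => mQ (row i N) = q *: mQ al)).
  by move=> i; apply/pi_eq0; rewrite rowE; apply: N0.
apply/rowP => j; rewrite !mxE rmorph_sum /mxtrace rmorph_sum mulr_suml.
apply: eq_bigr => i _; move/rowP: (Nq i) => Nqi.
by have := Nqi j; have := Nqi i; rewrite !mxE rmorphM /= => -> ->; ring.
Qed.

Lemma ker_stable_eigen E : ker_stable E -> exists lam, mQ (al *m E) = lam *: mQ al.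
Proof. by move=> EH; apply/pi_eq0/EH/pi_alpha. Qed.

Lemma eigen_integral E lam : mQ (al *m E) = lam *: mQ al -> integral_closure lam.
Proof.
move=> alE; exists (char_poly E); split; first exact: char_poly_monic.
rewrite /tofr map_char_poly; apply/rootP; rewrite -eigenvalue_root_char.
by apply/eigenvalueP; exists (mQ al); [rewrite -map_mxM | exact: alpha_neq0].
Qed.

Lemma linear_lifts f : linear f -> exists E, lifts f E.
Proof.
move=> f_lin; have [v fv] := fin_all_exists (fun i : 'I_3 => pi_surj (f (pi 'e_i))).
exists (\matrix_i v i) => z.
rewrite mulmx_sum_row linear_sum {2}(row_sum_delta z) linear_sum.
rewrite (big_morph f (linear_funD f_lin) (linear_fun0 f_lin)); apply: eq_bigr => i _.
by rewrite rowK !linearZ /= linear_funZ // fv.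
Qed.

Lemma lifts_ker_stable f E : f 0 = 0 -> lifts f E -> ker_stable E.
Proof. by move=> f0 fE z z0; rewrite fE z0 f0. Qed.

Lemma ker_stable_descends E : ker_stable E -> exists g, linear g /\ lifts g E.
Proof.
move=> EH; have lift m : exists v, pi v == m by have [v <-] := pi_surj m; exists v.
pose g m := pi (xchoose (lift m) *m E).
have gE : lifts g E.
  move=> z; apply/eqP; rewrite -subr_eq0 -linearB -mulmxBl; apply/eqP/EH.
  by rewrite linearB /= (eqP (xchooseP (lift (pi z)))) subrr.
exists g; split=> // r m1 m2.
have [v1 <-] := pi_surj m1; have [v2 <-] := pi_surj m2.
by rewrite -linearZ -linearD -!gE mulmxDl -scalemxAl linearD linearZ.
Qed.

Lemma pi_finitely_generated : finitely_generated M.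
Proof.
exists 3, (fun i => pi 'e_i) => m; have [x <-] := pi_surj m.
exists (x 0); rewrite {1}(row_sum_delta x) linear_sum.
by apply: eq_bigr => i _; rewrite linearZ.
Qed.

Lemma pi_torsion_free : torsion_free M.
Proof.
move=> r m r_neq0; have [v <-] := pi_surj m; rewrite -linearZ => /pi_eq0 [q rvq].
have r_neq0' : tf r != 0 by rewrite tofrac_eq0.
apply/pi_eq0; exists (q / tf r); apply: (scalerI r_neq0').
by rewrite -map_mxZ rvq !scalerA mulrCA divff ?mulr1.
Qed.

Lemma pi_e0_neq0 : pi 'e_i0 != 0.
Proof.
have b_neq0 := not_two_generated_neq0 (not_two_generated_rot ntg).
apply/eqP => /pi_eq0 [q /rowP e0q]; have := e0q i1; have := e0q i0; rewrite !mxE /=.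
move=> e00 /esym/eqP; rewrite rmorph0 mulf_eq0 tofrac_eq0 (negPf b_neq0) orbF => /eqP q0.
by move/eqP: e00; rewrite q0 mul0r rmorph1 oner_eq0.
Qed.

Lemma pi_has_rank2 : has_rank M 2.
Proof.
have c_neq0 := not_two_generated_neq0 (not_two_generated_rot (not_two_generated_rot ntg)).
split.
  exists (fun i : 'I_2 => pi 'e_(widen_ord (leqnSn 2) i)) => k.
  under eq_bigr do rewrite -linearZ; rewrite -linear_sum => /pi_eq0 [q /rowP kq].
  have := kq i2; have := kq i1; have := kq i0.
  rewrite !mxE !summxE !big_ord_recl !big_ord0 !mxE /= !mulr1 !mulr0 !addr0 !add0r rmorph0.
  move=> k0 k1 /esym/eqP; rewrite mulf_eq0 tofrac_eq0 (negPf c_neq0) orbF => /eqP q0.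
  move: k0 k1; rewrite q0 !mul0r => /eqP; rewrite tofrac_eq0 => /eqP k0 /eqP.
  rewrite tofrac_eq0 => /eqP k1 i.
  by case: i => [[|[|//]] i_lt]; [rewrite -k0 | rewrite -k1]; congr k; apply: val_inj.
move=> m m_indep; have [w mw] := fin_all_exists (fun i => pi_surj (m i)).
pose X := \matrix_(i < 3) w i.
have comb (u : 'rV_3) : \sum_i u 0 i *: m i = pi (u *m X).
  by rewrite mulmx_sum_row linear_sum; apply: eq_bigr => i _; rewrite linearZ rowK mw.
have [/eqP/det0P [u /negP u_neq0 uX0] | detX_neq0] := eqVneq (\det X) 0.
  by apply/u_neq0/eqP/rowP => i; rewrite mxE; apply: m_indep i; rewrite comb uX0 linear0.
(* Otherwise the coefficients of alpha *m adj X give the relation det X *: pi alpha = 0. *)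
pose u := al *m \adj X.
have uX : u *m X = \det X *: al by rewrite -mulmxA mul_adj_mx mul_mx_scalar.
have u0 : u = 0.
  apply/rowP => i; rewrite [RHS]mxE; apply: m_indep i.
  by rewrite comb uX linearZ /= pi_alpha scaler0.
move/eqP: uX; rewrite u0 mul0mx eq_sym scalemx_eq0 (negPf detX_neq0) /=.
by apply/negP; apply: contraNneq alpha_neq0 => ->; rewrite map_mx0.
Qed.

Lemma idempotent_lift_trace E x y : ker_stable E -> maps_into_ker (E *m E - E) ->
  pi (x *m E) != 0 -> pi (y *m (1%:M - E)) != 0 ->
  mQ (al *m E) = tf (\tr E - 1) *: mQ al.
Proof.
move=> EH E2 xE y1E.
have [lam alE] := ker_stable_eigen EH.
have off v : pi v != 0 -> forall q, mQ v != q *: mQ al.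
  by move=> v_neq0 q; apply: contra v_neq0 => /eqP vq; apply/eqP/pi_eq0; exists q.
have [s xEE] : exists s, mQ (x *m E *m E) = mQ (x *m E) + s *: mQ al.
  have [s es] := (pi_eq0 (x *m (E *m E - E))).1 (E2 x).
  by exists s; rewrite -es mulmxBr mulmxA map_mxB addrC subrK.
have [t y1EE] : exists t, mQ (y *m (1%:M - E) *m E) = t *: mQ al.
  by apply/pi_eq0; rewrite -mulmxA mulmxBl mul1mx -opprB mulmxN linearN /= E2 oppr0.
rewrite map_mxM in alE; rewrite map_mxM in xEE; rewrite map_mxM in y1EE.
have := mxtrace3_of_action alpha_neq0 (off _ xE) (off _ y1E) alE xEE y1EE.
by rewrite trace_map_mx map_mxM alE rmorphB rmorph1 => ->; rewrite addrK.
Qed.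

Hypothesis Rloc : local_ring R.

Lemma maps_into_ker_mull X N : maps_into_ker N -> maps_into_ker (X *m N).
Proof. by move=> N0 z; rewrite mulmxA N0. Qed.

Lemma maps_into_kerN N : maps_into_ker N -> maps_into_ker (- N).
Proof. by move=> N0 z; rewrite mulmxN linearN /= N0 oppr0. Qed.

Lemma idempotent_lift_trivial E : ker_stable E -> maps_into_ker (E *m E - E) ->
  maps_into_ker E \/ maps_into_ker (1%:M - E).
Proof.
move=> EH E2; apply: NNPP => /not_or_and[].
move=> /not_all_ex_not [x /eqP xE] /not_all_ex_not [y /eqP y1E].
pose l := \tr E - 1; pose S := E - l%:M.
have S_nonunit : nonunit_mx S.
  apply: syzygy_mx_nonunit; apply: map_mx_tofrac_inj.
  rewrite mulmxBr mul_mx_scalar map_mxB map_mxZ (idempotent_lift_trace EH E2 xE y1E).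
  by rewrite subrr map_mx0.
have ll1 : l * (l - 1) \notin GRing.unit.
  have e00 : (E *m E - E) i0 i0 = l * (l - 1) + ((2%:R * l - 1) *: S + S *m S) i0 i0.
    by rewrite !mxE !sum_ord3 !mxE /=; ring.
  move: (maps_into_ker_nonunit E2 i0 i0); rewrite e00 (local_unitDr Rloc) //.
  by apply: (nonunit_mxD Rloc); [apply: nonunit_mxZ | apply: nonunit_mxMl].
have EE1 : (1%:M - E) *m E = - (E *m E - E) by rewrite mulmxBl mul1mx opprB.
have E1E : E *m (1%:M - E) = - (E *m E - E) by rewrite mulmxBr mulmx1 opprB.
move: ll1; rewrite unitrM negb_and => /orP[l_nonunit | l1_nonunit].
  have E_nonunit : nonunit_mx E.
    by rewrite -(subrK l%:M E); apply: (nonunit_mxD Rloc) => //; apply: nonunit_scalar_mx.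
  have U : 1%:M - E \in unitmx by apply/(unitmx_1D Rloc)/nonunit_mxN.
  move/eqP: xE; apply; rewrite -(mulKmx U E) EE1.
  exact/maps_into_ker_mull/maps_into_kerN.
have E1_nonunit : nonunit_mx (E - 1%:M).
  have -> : E - 1%:M = S + (l - 1)%:M by rewrite /S [(l - 1)%:M]raddfB addrA subrK.
  by apply: (nonunit_mxD Rloc) => //; apply: nonunit_scalar_mx.
have U : E \in unitmx by rewrite -(subrK 1%:M E) addrC; apply: (unitmx_1D Rloc).
move/eqP: y1E; apply; rewrite -(mulKmx U (1%:M - E)) E1E.
exact/maps_into_ker_mull/maps_into_kerN.
Qed.

Lemma decomposition_lift (A B : M -> Prop) : submodule A -> submodule B ->
  (forall m, exists x y, A x /\ B y /\ m = x + y) ->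
  exists E, forall z, A (pi (z *m E)) /\ B (pi z - pi (z *m E)).
Proof.
move=> Asub Bsub dec.
have [x xP] := fin_all_exists (fun i : 'I_3 => dec (pi 'e_i)).
have [v vx] := fin_all_exists (fun i => pi_surj (x i)).
exists (\matrix_i v i) => z.
have -> : pi (z *m \matrix_i v i) = \sum_i z 0 i *: x i.
  by rewrite mulmx_sum_row linear_sum; apply: eq_bigr => i _; rewrite linearZ rowK vx.
split.
  by apply: submodule_sum => // i _; apply: submoduleZ => //; have [? []] := xP i.
rewrite {1}(row_sum_delta z) linear_sum -sumrB; apply: submodule_sum => // i _.
rewrite linearZ -scalerBr; apply: submoduleZ => //.
by have [y [_ [By ->]]] := xP i; rewrite [x i + y]addrC addrK.
Qed.

Lemma pi_indecomposable : indecomposable M.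
Proof.
split; first by exists (pi 'e_i0); apply: pi_e0_neq0.
move=> A B Asub Bsub dec AB0; have [E EAB] := decomposition_lift Asub Bsub dec.
have unique m x x' := @direct_sum_unique _ _ A B m x x' Asub Bsub AB0.
have [A0 _] := Asub; have [B0 _] := Bsub.
have Bvv v : B (v - v) by rewrite subrr; exact B0.
have EE z : pi (z *m E *m E) = pi (z *m E).
  have [A1 B1] := EAB (z *m E); have [A2 _] := EAB z.
  exact: unique _ _ _ A1 B1 A2 (Bvv _).
have EH : ker_stable E.
  move=> z z0; have [A1 B1] := EAB z; rewrite z0 in B1.
  exact: unique _ _ _ A1 B1 A0 (Bvv _).
have E2 : maps_into_ker (E *m E - E).
  by move=> z; rewrite mulmxBr linearB /= mulmxA EE subrr.
case: (idempotent_lift_trivial EH E2) => [E0 | E1]; [left | right] => m Cm;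
  have [x xm] := pi_surj m; have [A1 B1] := EAB x.
  by rewrite -(unique _ _ _ A1 B1 Cm) ?E0 // -xm; apply: Bvv.
have xE : pi (x *m E) = m.
  by apply/esym/eqP; rewrite -xm -subr_eq0 -linearB -{1}[x]mulmx1 -mulmxBr E1.
by rewrite -xE (unique _ _ _ A1 B1 A0) // subr0 xm.
Qed.

Lemma alpha_scale_inj q q' : q *: mQ al = q' *: mQ al -> q = q'.
Proof.
move/eqP; rewrite -subr_eq0 -scalerBl scaler_eq0 (negPf alpha_neq0) orbF subr_eq0.
by move/eqP.
Qed.

Lemma eigenD A B x y : mQ (al *m A) = x *: mQ al -> mQ (al *m B) = y *: mQ al ->
  mQ (al *m (A + B)) = (x + y) *: mQ al.
Proof. by move=> alA alB; rewrite mulmxDr map_mxD alA alB scalerDl. Qed.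

Lemma eigenM A B x y : mQ (al *m A) = x *: mQ al -> mQ (al *m B) = y *: mQ al ->
  mQ (al *m (A *m B)) = (x * y) *: mQ al.
Proof. by move=> alA alB; rewrite mulmxA map_mxM alA -scalemxAl -map_mxM alB scalerA. Qed.

Lemma eigenX A x k : mQ (al *m A) = x *: mQ al -> mQ (al *m A ^+ k) = x ^+ k *: mQ al.
Proof.
move=> alA; elim: k => [|k IHk]; first by rewrite expr0 mulmx1 scale1r.
by rewrite exprSr (eigenM IHk alA) -exprSr.
Qed.

Lemma end_unit_eigen_unit f A lam : linear f -> end_unit f -> lifts f A ->
  mQ (al *m A) = lam *: mQ al -> sub_unit (@integral_closure R) lam.
Proof.
move=> f_lin [g [g_lin [fK _]]] fA alA.
have [G gG] := linear_lifts g_lin.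
have [mu alG] := ker_stable_eigen (lifts_ker_stable (linear_fun0 g_lin) gG).
pose N := A *m G - 1%:M.
have N0 : maps_into_ker N.
  by move=> z; rewrite mulmxBr mulmx1 mulmxA linearB /= gG fA fK subrr.
have lam_mu : lam * mu = tf (1 + \tr N).
  apply: alpha_scale_inj; rewrite -(eigenM alA alG) -[A *m G](subrK 1%:M) -/N.
  rewrite mulmxDr mulmx1 map_mxD maps_into_ker_trace // rmorphD rmorph1 scalerDl scale1r.
  by rewrite addrC.
have N_unit : 1 + \tr N \is a GRing.unit.
  rewrite (local_unitDr Rloc) ?unitr1 //.
  exact/(nonunit_mxtrace Rloc)/maps_into_ker_nonunit.
exists (mu * tf (1 + \tr N)^-1); split.
  by apply: integral_closureM; [apply: eigen_integral alG | apply: integral_closure_tofrac].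
by rewrite mulrA lam_mu -rmorphM mulrV // rmorph1.
Qed.

Lemma eigen_unit_end_unit f A lam : lifts f A -> mQ (al *m A) = lam *: mQ al ->
  sub_unit (@integral_closure R) lam -> end_unit f.
Proof.
move=> fA alA [y [[p [p_monic py]] lam_y]].
have := reciprocal_root_sum (monic_map tf p_monic) (introT rootP py) lam_y.
rewrite size_map_inj_poly ?rmorph0 //; last exact: tofrac_inj.
set d := (size p).-1 => recip.
(* By the integral equation of y = lam^-1, A *m D acts on alpha as -1. *)
pose D := \sum_(i < d) p`_i *: A ^+ (d.-1 - i).
have alAD : mQ (al *m (A *m D)) = - mQ al.
  rewrite -scaleN1r -recip scaler_suml !mulmx_sumr raddf_sum; apply: eq_bigr => i _ /=.
  have -> : (d - i = (d.-1 - i).+1)%N by have := ltn_ord i; lia.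
  rewrite -!scalemxAr -[A *m _]/(A * A ^+ _) -exprS.
  by rewrite map_mxZ (eigenX _ alA) scalerA coef_map.
have alAD1 : al *m (A *m D + 1%:M) = 0.
  by apply: map_mx_tofrac_inj; rewrite mulmxDr mulmx1 map_mxD alAD map_mx0 addNr.
have A_unit : A \in unitmx.
  have := unitmx_1D Rloc (nonunit_mxN (syzygy_mx_nonunit alAD1)).
  by rewrite opprD addrCA subrr addr0 -mulmxN unitmx_mul => /andP[].
have lam_neq0 : lam != 0.
  by apply: contra_eq_neq lam_y => ->; rewrite mul0r eq_sym oner_neq0.
have alAinv : mQ (al *m invmx A) = lam^-1 *: mQ al.
  apply: (scalerI lam_neq0); rewrite scalerA mulfV // scale1r map_mxM scalemxAl -alA.
  by rewrite -map_mxM mulmxK.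
have Ainv_stable : ker_stable (invmx A).
  move=> z /pi_eq0 [q zq]; apply/pi_eq0; exists (q / lam).
  by rewrite map_mxM zq -scalemxAl -map_mxM alAinv scalerA.
have [g [g_lin gA]] := ker_stable_descends Ainv_stable.
exists g; split=> //; split=> m; have [v <-] := pi_surj m.
  by rewrite -fA -gA -mulmxA mulmxV // mulmx1.
by rewrite -gA -fA -mulmxA mulVmx // mulmx1.
Qed.

Lemma linear_lift_eigen f : linear f ->
  exists A lam, lifts f A /\ mQ (al *m A) = lam *: mQ al.
Proof.
move=> f_lin; have [A fA] := linear_lifts f_lin.
have [lam alA] := ker_stable_eigen (lifts_ker_stable (linear_fun0 f_lin) fA).
by exists A, lam.
Qed.

Hypothesis Rbar_loc : sub_local (@integral_closure R).

Lemma pi_End_local : End_local M.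
Proof.
have [I [[Ip _] Inonunit]] := sub_local_nonunit (@integral_closure0 R)
  (@integral_closure1 R) (@integral_closureD R) (@integral_closureM R) Rbar_loc.
have [[_ [_ [ID IM]]] _] := Ip.
have nonunit_eigen f A lam : linear f -> lifts f A -> mQ (al *m A) = lam *: mQ al ->
    ~ end_unit f <-> I lam.
  move=> f_lin fA alA; split=> [fNU | Ilam fU].
    apply: NNPP => nIlam; apply/fNU/(eigen_unit_end_unit fA alA).
    by apply: NNPP => lamNU; apply/nIlam/Inonunit => //; apply: eigen_integral alA.
  exact: (sub_unit_notin_proper_ideal Ip (end_unit_eigen_unit f_lin fU fA alA)).
split; [|split].
- by move=> M0; move/eqP: pi_e0_neq0; apply; apply: M0.
- move=> f g f_lin g_lin fNU gNU.
  have [A [x [fA alA]]] := linear_lift_eigen f_lin.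
  have [B [y [gB alB]]] := linear_lift_eigen g_lin.
  have fg_lin : linear (fun m => f m + g m).
    by move=> r u v; rewrite f_lin g_lin scalerDr addrACA.
  have fgAB : lifts (fun m => f m + g m) (A + B).
    by move=> z; rewrite mulmxDr linearD /= fA gB.
  apply/(nonunit_eigen _ _ _ fg_lin fgAB (eigenD alA alB)).
  by apply: ID; [apply/(nonunit_eigen f A) | apply/(nonunit_eigen g B)].
- move=> f h f_lin h_lin fNU.
  have [A [x [fA alA]]] := linear_lift_eigen f_lin.
  have [B [y [hB alB]]] := linear_lift_eigen h_lin.
  have Ix : I x by apply/(nonunit_eigen f A).
  have Iy : integral_closure y := eigen_integral alB.
  have hf_lin : linear (h \o f) by move=> r u v /=; rewrite f_lin h_lin.
  have fh_lin : linear (f \o h) by move=> r u v /=; rewrite h_lin f_lin.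
  have hfAB : lifts (h \o f) (A *m B) by move=> z; rewrite mulmxA hB fA.
  have fhBA : lifts (f \o h) (B *m A) by move=> z; rewrite mulmxA fA hB.
  split.
    by apply/(nonunit_eigen _ _ _ hf_lin hfAB (eigenM alA alB)); rewrite mulrC; apply: IM.
  by apply/(nonunit_eigen _ _ _ fh_lin fhBA (eigenM alB alA)); apply: IM.
Qed.

End QuotientModule.

Theorem mainTheorem7 (R : idomainType) (a b c : R) (M : lmodType R)
    (pi : {linear 'rV[R]_3 -> M}) :
  local_ring R ->
  not_two_generated a b c ->
  (forall m : M, exists v, pi v = m) ->
  (forall v, pi v = 0 <-> inH a b c v) ->
  (indecomposable M /\ finitely_generated M /\ torsion_free M /\ has_rank M 2) /\
  (sub_local (@integral_closure R) -> End_local M).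
Proof.
move=> Rloc ntg pi_surj ker_pi.
split; last exact (pi_End_local ntg pi_surj ker_pi Rloc).
split; first exact (pi_indecomposable ntg pi_surj ker_pi Rloc).
split; first exact (pi_finitely_generated pi_surj).
split; first exact (pi_torsion_free pi_surj ker_pi).
exact (pi_has_rank2 ntg pi_surj ker_pi).
Qed.
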